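(* Let $k$ be an infinite field, $n\ge 1$, and let $k\subset E$ be a finite Galois extension with Galois group $G_{E/k}=\mathrm{Gal}(E|k)$. Let $P\subset \mathbb{P}^n(E)$ be a set of $n+1$ distinct points which is stable under the natural action of $G_{E/k}$ (so $P$ is a $G_{E/k}$-set). Then there exists a set $Q\subset\mathbb{P}^n(E)$ of $n+1$ points, not all lying on a common hyperplane (i.e. in general linear position), which is stable under $G_{E/k}$ and isomorphic to $P$ as a $G_{E/k}$-set.
   Context: $G_{E/k}$ acts on $\mathbb{P}^n(E)$ coordinatewise. *)

From HB Require Import structures.
From mathcomp Require Import all_boot all_order all_algebra all_fingroup all_field.
Set Implicit Arguments. Unset Strict Implicit. Unset Printing Implicit Defensive.
Import GRing.Theory.
Local Open Scope ring_scope.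

(* Points of P^n(L) are represented by nonzero row vectors of length n+1;
   two representatives give the same point iff they are proportional. *)
Definition proj_eq (L : fieldType) (m : nat) (u v : 'rV[L]_m) : Prop :=
  exists c : L, c != 0 /\ u = c *: v.

Definition gal_act (F : fieldType) (L : splittingFieldType F)
  (s : gal_of {:L}) (m : nat) (u : 'rV[L]_m) : 'rV[L]_m :=
  map_mx (fun x => s x) u.

Definition distinct_points (L : fieldType) (m d : nat) (p : 'I_m -> 'rV[L]_d) : Prop :=
  (forall i, p i != 0) /\ (forall i j, proj_eq (p i) (p j) -> i = j).

Definition gal_stable (F : fieldType) (L : splittingFieldType F) (m d : nat)
  (p : 'I_m -> 'rV[L]_d) : Prop :=
  forall s, s \in ('Gal({:L} / 1%AS))%g ->
    forall i, exists j, proj_eq (gal_act s (p i)) (p j).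

Definition on_common_hyperplane (L : fieldType) (m d : nat) (p : 'I_m -> 'rV[L]_d) : Prop :=
  exists a : 'cV[L]_d, a != 0 /\ forall i, p i *m a = 0.

From HB Require Import structures.
From mathcomp Require Import all_boot all_order all_algebra all_fingroup all_field.
Set Implicit Arguments. Unset Strict Implicit. Unset Printing Implicit Defensive.
Import GRing.Theory.
Local Open Scope ring_scope.

(* Reading a representative v as a polynomial, its value at a point t of the
   base field commutes with the Galois action.  Dividing each representative
   by its value at a t where none of them vanishes therefore yields
   representatives that the Galois group permutes exactly, not only up to
   scalars.  Their values at a second generic point are pairwise distinct
   scalars a_i permuted in the same way, and the points (1 : a_i : ... : a_i^n)
   of the rational normal curve are in general position, since a nonzero
   polynomial of degree at most n has at most n roots. *)

Lemma exists_uniq_seq_of_size (T : eqType) :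
  (forall s : seq T, exists x, x \notin s) ->
  forall k, exists s : seq T, uniq s /\ size s = k.
Proof.
move=> T_inf; elim=> [|k [s [s_uniq <-]]]; first by exists [::].
by have [x xNs] := T_inf s; exists (x :: s); rewrite /= xNs s_uniq.
Qed.

Lemma exists_common_nonroot (F : fieldType) (L : fieldExtType F) (I : finType)
    (P : I -> {poly L}) :
  (forall s : seq F, exists x, x \notin s) -> (forall i, P i != 0) ->
  exists t : F, forall i, ~~ root (P i) t%:A.
Proof.
move=> F_inf P_neq0.
have prodP_neq0 : \prod_i P i != 0 by apply/prodf_neq0 => i _.
suff [t prodP_t] : exists t : F, ~~ root (\prod_i P i) t%:A.
  by exists t => i; move: prodP_t; rewrite rootE horner_prod => /prodf_neq0; apply.
have [s [s_uniq s_size]] := exists_uniq_seq_of_size F_inf (size (\prod_i P i)).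
have [all_roots|/allPn[t _ ?]] := boolP (all (fun t : F => root (\prod_i P i) t%:A) s).
  have := max_poly_roots prodP_neq0 (rs := map (in_alg L) s).
  by rewrite all_map size_map s_size ltnn (map_inj_uniq (fmorph_inj _)) => /(_ all_roots s_uniq).
by exists t.
Qed.

Lemma rVpoly_eq0 (R : nzRingType) m (v : 'rV[R]_m) : (rVpoly v == 0) = (v == 0).
Proof. by rewrite -(can_eq rVpolyK) linear0. Qed.

Lemma exists_separating_eval (F : fieldType) (L : fieldExtType F) (I : finType) m
    (w : I -> 'rV[L]_m) :
  (forall s : seq F, exists x, x \notin s) -> injective w ->
  exists t : F, injective (fun i => (rVpoly (w i)).[t%:A]).
Proof.
move=> F_inf w_inj.
pose D (ij : I * I) : {poly L} := if ij.1 == ij.2 then 1 else rVpoly (w ij.1 - w ij.2).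
have D_neq0 ij : D ij != 0.
  rewrite /D; have [_|ij_neq] := eqVneq ij.1 ij.2; first exact: oner_neq0.
  by rewrite rVpoly_eq0 subr_eq0 (inj_eq w_inj).
have [t Dt] := exists_common_nonroot F_inf D_neq0.
exists t => i j eq_ij; apply/eqP; apply: contraLR (Dt (i, j)) => /= ij_neq.
by rewrite /D /= (negbTE ij_neq) rootE linearB hornerD hornerN subr_eq0 eq_ij eqxx.
Qed.

Lemma proj_eq_refl (K : fieldType) m (u : 'rV[K]_m) : proj_eq u u.
Proof. by exists 1; rewrite oner_neq0 scale1r. Qed.

Section PowersRow.
Variables (K : fieldType) (m : nat).

Definition powers_rV (x : K) : 'rV[K]_m := \row_(k < m) x ^+ k.

Lemma powers_rV_mulmx (x : K) (a : 'cV[K]_m) :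
  (powers_rV x *m a) 0 0 = (rVpoly a^T).[x].
Proof.
by rewrite !mxE horner_poly; apply: eq_bigr => k _; rewrite valK !mxE mulrC.
Qed.

Lemma powers_rV_general_position (a : 'I_m -> K) :
  injective a -> ~ on_common_hyperplane (fun i => powers_rV (a i)).
Proof.
move=> a_inj [c [c_neq0 c_ann]].
have roots_c i : root (rVpoly c^T) (a i).
  by rewrite rootE -powers_rV_mulmx c_ann mxE.
have : rVpoly c^T != 0 by rewrite rVpoly_eq0 -(inj_eq trmx_inj) trmx0 trmxK.
move/max_poly_roots => /(_ (map a (enum 'I_m))).
rewrite size_map size_enum_ord (map_inj_uniq a_inj) enum_uniq.
have -> : all (root (rVpoly c^T)) (map a (enum 'I_m)) by apply/allP => _ /mapP[i _ ->].
by move/(_ isT isT); rewrite ltnNge size_poly.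
Qed.

Lemma powers_rV_neq0 (x : K) : (0 < m)%N -> powers_rV x != 0.
Proof.
move=> m_gt0; apply/eqP => /rowP/(_ (Ordinal m_gt0)).
by rewrite !mxE expr0; apply/eqP/oner_neq0.
Qed.

Lemma proj_eq_powers_rV (x y : K) :
  (1 < m)%N -> proj_eq (powers_rV x) (powers_rV y) -> x = y.
Proof.
move=> m_gt1 [c [_ /rowP xy]].
have := xy (Ordinal (ltnW m_gt1)); have := xy (Ordinal m_gt1).
by rewrite !mxE !expr0 !expr1 mulr1 => -> <-; rewrite mul1r.
Qed.

End PowersRow.

Section GaloisAction.
Variables (F : fieldType) (L : splittingFieldType F).
Implicit Types (s : gal_of {:L}) (t : F).

Lemma gal_actZ s m (c : L) (v : 'rV[L]_m) : gal_act s (c *: v) = s c *: gal_act s v.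
Proof. by apply/rowP => k; rewrite !mxE rmorphM. Qed.

Lemma gal_act_horner s t m (v : 'rV[L]_m) :
  s (rVpoly v).[t%:A] = (rVpoly (gal_act s v)).[t%:A].
Proof. by rewrite -horner_map map_rVpoly; congr (rVpoly _).[_]; exact: rmorph_alg. Qed.

Definition chart_rep t m (v : 'rV[L]_m) : 'rV[L]_m := ((rVpoly v).[t%:A])^-1 *: v.

(* No non-vanishing hypothesis is needed: the junk value 0^-1 = 0 is
   compatible with the action as well. *)
Lemma gal_act_chart_rep s t m (u v : 'rV[L]_m) :
  proj_eq (gal_act s u) v -> gal_act s (chart_rep t u) = chart_rep t v.
Proof.
move=> [c [c_neq0 su]].
have s_eval : s (rVpoly u).[t%:A] = c * (rVpoly v).[t%:A].
  by rewrite gal_act_horner su linearZ hornerZ.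
rewrite /chart_rep gal_actZ fmorphV [X in X^-1]s_eval su scalerA.
by rewrite invfM mulrAC mulVf // mul1r.
Qed.

Lemma chart_rep_proj_eq t m (u v : 'rV[L]_m) :
  ~~ root (rVpoly u) t%:A -> ~~ root (rVpoly v) t%:A ->
  chart_rep t u = chart_rep t v -> proj_eq u v.
Proof.
rewrite /chart_rep /root => u_t v_t uv.
exists ((rVpoly u).[t%:A] / (rVpoly v).[t%:A]); rewrite mulf_neq0 ?invr_eq0 //.
by split=> //; rewrite -scalerA -uv scalerA divff // scale1r.
Qed.

Lemma gal_act_powers_rV s m (x : L) : gal_act s (powers_rV m x) = powers_rV m (s x).
Proof. by apply/rowP => k; rewrite !mxE rmorphXn. Qed.

End GaloisAction.

Theorem lemma4p1 (F : fieldType) (L : splittingFieldType F)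
  (Finf : forall s : seq F, exists x : F, x \notin s)
  (Lgal : galois 1%AS {:L})
  (n : nat) (hn : (1 <= n)%N)
  (p : 'I_n.+1 -> 'rV[L]_n.+1)
  (hp : distinct_points p) (hPst : gal_stable p) :
  exists (q : 'I_n.+1 -> 'rV[L]_n.+1) (f : 'I_n.+1 -> 'I_n.+1),
    [/\ distinct_points q, ~ on_common_hyperplane q, gal_stable q,
        bijective f &
        forall s, s \in ('Gal({:L} / 1%AS))%g -> forall i j,
          proj_eq (gal_act s (p i)) (p j) <-> proj_eq (gal_act s (q (f i))) (q (f j))].
Proof.
case: hp => p_neq0 p_proj_inj.
have [t p_t] : exists t : F, forall i, ~~ root (rVpoly (p i)) t%:A.
  by apply: exists_common_nonroot => // i; rewrite rVpoly_eq0.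
pose ph i := chart_rep t (p i).
have ph_inj : injective ph by move=> i j /(chart_rep_proj_eq (p_t i) (p_t j))/p_proj_inj.
have [u al_inj] := exists_separating_eval Finf ph_inj.
pose al i := (rVpoly (ph i)).[u%:A].
pose q i := powers_rV n.+1 (al i).
have q_act s i j : proj_eq (gal_act s (p i)) (p j) -> gal_act s (q i) = q j.
  by move/(gal_act_chart_rep t) => ph_act; rewrite gal_act_powers_rV gal_act_horner ph_act.
have q_proj_inj i j : proj_eq (q i) (q j) -> i = j.
  by move/(@proj_eq_powers_rV _ n.+1 _ _ hn)/al_inj.
exists q, id; split => //.
- by split=> [i|]; [exact: powers_rV_neq0 | exact: q_proj_inj].
- exact: powers_rV_general_position.
- move=> s sG i; have [j /q_act sq] := hPst s sG i.
  by exists j; rewrite sq; apply: proj_eq_refl.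
- by exists id.
move=> s sG i j; split=> [/q_act -> | ]; first exact: proj_eq_refl.
have [k sp_k] := hPst s sG i.
by rewrite (q_act _ _ _ sp_k) => /q_proj_inj <-.
Qed.
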